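(* There exist two non-isomorphic clique complexes $K$ and $K'$ (with colored vertices) such that the Simplicial Weisfeiler–Leman (SWL) test cannot distinguish $K$ from $K'$, but there is a color-based filtration whose persistence diagrams for $K$ and $K'$ differ.
   Context: An abstract simplicial complex $K$ over a vertex set $V$ is a set of nonempty subsets of $V$ (simplices) closed under taking nonempty subsets; the clique complex of a graph has as simplices all cliques of the graph. Simplices carry colors (attributes). For a simplex $\sigma$, its boundary neighborhood is $\mathcal{B}(\sigma)=\{\tau\subset\sigma:\dim\tau=\dim\sigma-1\}$ and its upper-adjacency neighborhood is $\mathcal{N}_\uparrow(\sigma)=\{\sigma': \dim\sigma'=\dim\sigma,\ \exists\,\delta\in K \text{ with } \sigma\subset\delta,\ \sigma'\subset\delta,\ \dim\delta=\dim\sigma+1\}$. The Simplicial Weisfeiler–Leman test (Bodnar et al.) is the color-refinement procedure that iteratively updates the color of every simplex by hashing its current color together with the multiset of colors of its boundary neighbors and the multiset of (colors of) its upper-adjacent neighbors (including the color of the shared coface); two complexes are distinguished if at some iteration their multisets of simplex colors differ. A color-based filtration is a filtration $\emptyset=K_0\subset K_{\alpha_1}\subset\dots\subset K_{\alpha_n}=K$ induced by a filtering function $f$ applied to colors of simplices (e.g. vertex colors, with each simplex entering at the maximum value of $f$ over its vertices, or edge colors analogously); persistence diagrams record the (birth, death) pairs of homological features (connected components, cycles, etc.) along the filtration. *)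

From HB Require Import structures.
From mathcomp Require Import all_boot all_order all_algebra.

Set Implicit Arguments.
Unset Strict Implicit.
Unset Printing Implicit Defensive.

Import GRing.Theory.
Local Open Scope ring_scope.

Definition simple_graph (V : finType) (e : rel V) : Prop :=
  symmetric e /\ irreflexive e.

(* Colors produced by the refinement: finite trees (countable, so that an
   injective "hash" into a canonical multiset representation is available). *)
Definition color := GenTree.tree nat.

(* canonical representation of a multiset of colors: sort by pickle *)
Definition msort (s : seq color) : seq color :=
  sort (fun a b : color => (pickle a <= pickle b)%N) s.

Section Complex.
Variables (V : finType) (e : rel V) (c : V -> nat).

Definition is_clique (s : {set V}) : bool :=
  [forall x in s, forall y in s, (x != y) ==> e x y].

Definition simplex (s : {set V}) : bool := (s != set0) && is_clique s.

Definition simplices : seq {set V} := enum [pred s : {set V} | simplex s].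

Definition boundary_nb (s : {set V}) : seq {set V} :=
  [seq t : {set V} <- simplices | (t \subset s) && (#|t|.+1 == #|s|)%N].

(* upper-adjacent simplices sigma' (distinct from sigma, same dimension) sharing
   a coface delta of one more dimension; in a simplicial complex delta = s :|: t *)
Definition upper_nb (s : {set V}) : seq {set V} :=
  [seq t : {set V} <- simplices | [&& t != s, #|t| == #|s|, simplex (s :|: t)
                          & #|s :|: t| == #|s|.+1]%N].

Definition init_color (s : {set V}) : color :=
  GenTree.Node 0 [seq GenTree.Leaf n | n <- sort leq [seq c v | v <- enum s]].

Fixpoint swl_color (t : nat) (s : {set V}) : color :=
  match t with
  | 0 => init_color s
  | t'.+1 =>
      GenTree.Node 1
        [:: swl_color t' s;
            GenTree.Node 2 (msort [seq swl_color t' b | b <- boundary_nb s]);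
            GenTree.Node 3 (msort [seq GenTree.Node 4 [:: swl_color t' u;
                                                        swl_color t' (s :|: u)]
                                  | u <- upper_nb s])]
  end.

Definition swl_hist (t : nat) : seq color := [seq swl_color t s | s <- simplices].

Variable f : nat -> nat.

Definition fval (s : {set V}) : nat := (\max_(v in s) f (c v))%N.

(* K_t (Some t) and the whole complex K (None = infinity) *)
Definition filt (o : option nat) : pred {set V} :=
  [pred s | simplex s && (if o is Some t then (fval s <= t)%N else true)].

Local Notation N := #|{: {set V}}|.

Definition sofi (i : 'I_N) : {set V} := enum_val i.

(* row space = k-chains supported on the k-simplices of P (k+1 vertices) *)
Definition chains (P : pred {set V}) (k : nat) : 'M['F_2]_N :=
  diag_mx (\row_i (P (sofi i) && (#|sofi i| == k.+1)%N)%:R).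

(* boundary operator acting on row vectors: x *m bnd *)
Definition bnd : 'M['F_2]_N :=
  \matrix_(i, j) ([&& sofi j \subset sofi i,
                     #|sofi j|.+1 == #|sofi i| & sofi j != set0]%N)%:R.

Definition cycles (P : pred {set V}) (k : nat) : 'M['F_2]_N :=
  (chains P k :&: kermx bnd)%MS.

Definition bounds (P : pred {set V}) (k : nat) : 'M['F_2]_N :=
  chains P k.+1 *m bnd.

(* persistent Betti number beta_k^{a,b} = rank of H_k(K_a) -> H_k(K_b) *)
Definition pbetti (k a : nat) (b : option nat) : nat :=
  (\rank (cycles (filt (Some a)) k)
   - \rank (cycles (filt (Some a)) k :&: bounds (filt b) k)%MS)%N.

(* beta_k^{i-1,b}, with K_{-1} the empty complex *)
Definition pbetti_prev (k i : nat) (b : option nat) : nat :=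
  if i is i'.+1 then pbetti k i' b else 0%N.

(* persistence diagram in dimension k: multiplicity of the point
   (birth i, death j), j = None meaning death at infinity *)
Definition pdiagram (k i : nat) (j : option nat) : int :=
  match j with
  | Some j' =>
      if (i < j')%N then
        (pbetti k i (Some j'.-1))%:Z - (pbetti k i (Some j'))%:Z
        - (pbetti_prev k i (Some j'.-1))%:Z + (pbetti_prev k i (Some j'))%:Z
      else 0
  | None => (pbetti k i None)%:Z - (pbetti_prev k i None)%:Z
  end.

End Complex.

Definition colored_iso (V V' : finType) (e : rel V) (c : V -> nat)
    (e' : rel V') (c' : V' -> nat) : Prop :=
  exists phi : V -> V', [/\ bijective phi,
    forall s : {set V}, simplex e s = simplex e' (phi @: s)
    & forall v, c' (phi v) = c v].

Definition swl_indistinguishable (V V' : finType) (e : rel V) (c : V -> nat)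
    (e' : rel V') (c' : V' -> nat) : Prop :=
  forall t, perm_eq (swl_hist e c t) (swl_hist e' c' t).

Definition pd_differ (V V' : finType) (e : rel V) (c : V -> nat)
    (e' : rel V') (c' : V' -> nat) (f : nat -> nat) : Prop :=
  exists k i j, pdiagram e c f k i j != pdiagram e' c' f k i j.

From mathcomp Require Import all_boot all_order all_algebra.

Set Implicit Arguments.
Unset Strict Implicit.
Unset Printing Implicit Defensive.

Import GRing.Theory.

(* K is the 8-cycle 0-1-...-7-0 and K' the disjoint union of the 4-cycles 0-1-2-3 and
   4-5-6-7, each vertex v coloured v mod 4. Both clique complexes are triangle free and
   in both a vertex of colour r has exactly one neighbour of colour r+1 and one of colour
   r-1 (mod 4), so by induction the SWL colour of a simplex only depends on the multiset
   of its vertex colours. As K and K' have the same coloured vertices and the same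
   coloured edges, their colour histograms agree at every iteration; yet K is connected
   and K' is not.
   Filtering by the vertex colour, K_0 = K'_0 consists of the vertices 0 and 4. The class
   [0] + [4] of H_0(K_0; F_2) dies in K, along the path 0-1-2-3-4, but survives in K',
   where the indicator of either component is a cocycle detecting it. Hence the point
   (0, oo) has different multiplicities in the 0-dimensional persistence diagrams. *)

Lemma perm_msort (a b : seq color) : perm_eq a b -> msort a = msort b.
Proof.
move=> ab; apply/perm_sortP => //.
- by move=> x y; apply: leq_total.
- by move=> x y z; apply: leq_trans.
- by move=> x y /anti_leq; apply: (pcan_inj (@pickleK _)).
Qed.

Lemma sort_leq_pair (a b : nat) :
  sort leq [:: a; b] = if a <= b then [:: a; b] else [:: b; a].
Proof. by rewrite /sort /=; case: leqP. Qed.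

Lemma set1_eq (V : finType) (a b : V) : ([set a] == [set b]) = (a == b).
Proof. by apply/eqP/eqP => [/set1_inj | ->]. Qed.

Lemma subset_pair_card1 (V : finType) (a b : V) (T : {set V}) :
  (T \subset [set a; b]) && (#|T| == 1) = (T == [set a]) || (T == [set b]).
Proof.
apply/andP/orP => [[sTab /cards1P [x defT]] | [] /eqP ->].
- by move: sTab; rewrite defT sub1set !inE !set1_eq => /orP.
- by rewrite sub1set !inE eqxx cards1; split.
- by rewrite sub1set !inE eqxx orbT cards1; split.
Qed.

Section CliqueComplex.
Variables (V : finType) (e : rel V).

Lemma mem_simplices t : (t \in simplices e) = simplex e t.
Proof. by rewrite mem_enum. Qed.

Lemma simplex_rel t x y : simplex e t -> x \in t -> y \in t -> x != y -> e x y.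
Proof.
case/andP=> _ /forall_inP/(_ x) cl xt yt.
by move/forall_inP/(_ y yt)/implyP: (cl xt).
Qed.

Lemma simplex_set1 v : simplex e [set v].
Proof.
apply/andP; split; first by apply/set0Pn; exists v; rewrite inE.
by apply/forall_inP => x /set1P ->; apply/forall_inP => y /set1P ->; rewrite eqxx.
Qed.

Lemma simplex_pair a b : symmetric e -> a != b -> simplex e [set a; b] = e a b.
Proof.
move=> sym_e ab; apply/idP/idP => [t_ab | e_ab].
  by apply: simplex_rel t_ab _ _ ab; rewrite !inE eqxx ?orbT.
apply/andP; split; first by apply/set0Pn; exists a; rewrite !inE eqxx.
apply/forall_inP => x /set2P [] ->; apply/forall_inP => y /set2P [] ->;
  by rewrite ?eqxx //= ?(sym_e b) e_ab implybT.
Qed.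

Lemma boundary_nb_set1 v : boundary_nb e [set v] = [::].
Proof.
rewrite /boundary_nb (eq_in_filter (a2 := pred0)) ?filter_pred0 // => t.
by rewrite mem_simplices cards1 eqSS cards_eq0 => /andP [/negbTE -> _]; rewrite andbF.
Qed.

Lemma perm_boundary_nb_pair a b : a != b ->
  perm_eq (boundary_nb e [set a; b]) [:: [set a]; [set b]].
Proof.
move=> ab; apply: uniq_perm; first by rewrite filter_uniq ?enum_uniq.
  by rewrite /= inE set1_eq ab.
move=> t; rewrite mem_filter mem_simplices cards2 ab eqSS subset_pair_card1 !inE.
by apply/andP/idP => [[] | t1] //; split=> //; case/orP: t1 => /eqP ->; apply: simplex_set1.
Qed.

End CliqueComplex.

Definition cycle_rel (T : eqType) (s : T -> T) : rel T :=
  fun x y => (y == s x) || (x == s y).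

Lemma cycle_rel_sym (T : eqType) (s : T -> T) : symmetric (cycle_rel s).
Proof. by move=> x y; rewrite /cycle_rel orbC. Qed.

Definition vcolors (V : finType) (c : V -> nat) (t : {set V}) : seq nat :=
  sort leq [seq c x | x <- enum t].

Lemma vcolors_set1 (V : finType) (c : V -> nat) v : vcolors c [set v] = [:: c v].
Proof. by rewrite /vcolors enum_set1. Qed.

Lemma vcolors_pair (V : finType) (c : V -> nat) a b :
  a != b -> vcolors c [set a; b] = sort leq [:: c a; c b].
Proof.
move=> ab; apply/perm_sortP.
- by move=> x y; apply: leq_total.
- by move=> x y z; apply: leq_trans.
- by move=> x y /anti_leq.
apply: (@perm_map _ _ c _ [:: a; b]); apply: uniq_perm; rewrite ?enum_uniq //= ?inE ?ab //.
by move=> x; rewrite mem_enum !inE.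
Qed.

(* [profile_color] predicts the SWL colour of a simplex from the sorted list of its
   vertex colours, in a triangle-free complex where every vertex of colour [r] has
   exactly one neighbour of colour [nextc r] and one of colour [prevc r]. *)
Section ColorProfile.
Variables nextc prevc : nat -> nat.

Definition boundary_profile (x : seq nat) : seq (seq nat) :=
  if x is [:: r1; r2] then [:: [:: r1]; [:: r2]] else [::].

Definition upper_profile (x : seq nat) : seq (seq nat * seq nat) :=
  if x is [:: r] then [:: ([:: nextc r], sort leq [:: r; nextc r]);
                          ([:: prevc r], sort leq [:: r; prevc r])]
  else [::].

Fixpoint profile_color (t : nat) (x : seq nat) : color :=
  match t with
  | 0 => GenTree.Node 0 [seq GenTree.Leaf n | n <- x]
  | t'.+1 => GenTree.Node 1
      [:: profile_color t' x;
          GenTree.Node 2 (msort (map (profile_color t') (boundary_profile x)));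
          GenTree.Node 3 (msort [seq GenTree.Node 4 [:: profile_color t' q.1;
                                                      profile_color t' q.2]
                                | q <- upper_profile x])]
  end.

End ColorProfile.

Section CycleCover.
Variables (V : finType) (s p : V -> V) (c : V -> nat) (nextc prevc : nat -> nat).
Local Notation E := (cycle_rel s).
Hypotheses (sK : cancel s p) (pK : cancel p s).
Hypotheses (s_nofix : forall v, s v != v) (s2_nofix : forall v, s (s v) != v).
Hypothesis triangle_free : forall x y z, E x y -> E y z -> E x z -> False.
Hypotheses (c_next : forall v, c (s v) = nextc (c v))
           (c_prev : forall v, c (p v) = prevc (c v)).

Lemma neq_s v : v != s v. Proof. by rewrite eq_sym. Qed.

Lemma neq_p v : v != p v. Proof. by have := s_nofix (p v); rewrite pK. Qed.

Lemma s_neq_p v : s v != p v.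
Proof. by apply: contra (s2_nofix v) => /eqP ->; rewrite pK. Qed.

Lemma simplex_edge v : simplex E [set v; s v].
Proof.
by rewrite simplex_pair ?neq_s //; [rewrite /cycle_rel eqxx | apply: cycle_rel_sym].
Qed.

Lemma simplexP t : simplex E t ->
  (exists v, t = [set v]) \/ (exists v, t = [set v; s v]).
Proof.
move=> simt; have /andP [/set0Pn [x xt] _] := simt.
have [tx | /subsetPn [y yt]] := boolP (t \subset [set x]).
  by left; exists x; apply/eqP; rewrite eqEsubset tx sub1set xt.
rewrite inE => yx; have exy : E x y by apply: simplex_rel simt _ _ _; rewrite // eq_sym.
have -> : t = [set x; y].
  apply/eqP; rewrite eqEsubset; apply/andP; split; last first.
    by apply/subsetP => z /set2P [] ->.
  apply/subsetP => z zt; rewrite !inE; apply/negPn/negP; rewrite negb_or => /andP [zx zy].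
  by apply: (triangle_free (z := z) exy); apply: simplex_rel simt _ _ _; rewrite 1?eq_sym.
right; case/orP: exy => /eqP ->; first by exists x.
by exists y; rewrite setUC.
Qed.

Lemma card_simplex t : simplex E t -> #|t| <= 2.
Proof. by case/simplexP => [] [v ->]; rewrite ?cards1 ?cards2 ?ltnS ?leq_b1. Qed.

Lemma upper_nb_edge v : upper_nb E [set v; s v] = [::].
Proof.
rewrite /upper_nb (eq_in_filter (a2 := pred0)) ?filter_pred0 // => t _ /=.
apply/negP => /and4P [_ _ /card_simplex le2 /eqP card3].
by move: le2; rewrite card3 cards2 neq_s.
Qed.

Lemma perm_upper_nb_set1 v : perm_eq (upper_nb E [set v]) [:: [set s v]; [set p v]].
Proof.
apply: uniq_perm; first by rewrite filter_uniq ?enum_uniq.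
  by rewrite /= inE set1_eq s_neq_p.
move=> t; rewrite mem_filter mem_simplices !inE cards1; apply/idP/idP.
  case/andP => /and4P [tv /eqP t1 simvt _] _.
  have /cards1P [w tw] : #|t| == 1 by rewrite t1.
  move: tv simvt; rewrite tw !set1_eq => wv simvw.
  have : E v w by apply: simplex_rel simvw _ _ _; rewrite ?inE ?eqxx ?orbT // eq_sym.
  by case/orP => /eqP ->; rewrite ?sK eqxx ?orbT.
case/orP => /eqP ->; rewrite simplex_set1 cards1 set1_eq andbT /=.
  by rewrite s_nofix simplex_edge cards2 neq_s.
by rewrite eq_sym neq_p cards2 neq_p andbT setUC -{2}(pK v) simplex_edge.
Qed.

Lemma perm_boundary_profile t : simplex E t ->
  perm_eq (map (vcolors c) (boundary_nb E t)) (boundary_profile (vcolors c t)).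
Proof.
case/simplexP => [] [v ->]; first by rewrite boundary_nb_set1 vcolors_set1.
apply: perm_trans (perm_map _ (perm_boundary_nb_pair _ (neq_s v))) _.
rewrite /= vcolors_pair ?neq_s // !vcolors_set1 sort_leq_pair.
by case: leqP => // _; apply/permP => q /=; rewrite !addn0 addnC.
Qed.

Lemma perm_upper_profile t : simplex E t ->
  perm_eq [seq (vcolors c u, vcolors c (t :|: u)) | u <- upper_nb E t]
          (upper_profile nextc prevc (vcolors c t)).
Proof.
case/simplexP => [] [v ->]; last first.
  by rewrite upper_nb_edge vcolors_pair ?neq_s // sort_leq_pair; case: leqP.
apply: perm_trans (perm_map _ (perm_upper_nb_set1 v)) _.
by rewrite /= !vcolors_set1 !vcolors_pair ?neq_s ?neq_p // c_next c_prev.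
Qed.

Lemma swl_color_profile k t :
  simplex E t -> swl_color E c k t = profile_color nextc prevc k (vcolors c t).
Proof.
elim: k t => [|k IHk] t simt //=; rewrite IHk //.
set F := profile_color nextc prevc k.
congr (GenTree.Node 1 [:: _; GenTree.Node 2 _; GenTree.Node 3 _]).
  have -> : map (swl_color E c k) (boundary_nb E t) = map (F \o vcolors c) (boundary_nb E t).
    by apply/eq_in_map => b; rewrite mem_filter mem_simplices => /andP [_ /IHk].
  by rewrite map_comp; apply/perm_msort/perm_map/perm_boundary_profile.
have -> : [seq GenTree.Node 4 [:: swl_color E c k u; swl_color E c k (t :|: u)]
          | u <- upper_nb E t] =
          map ((fun q => GenTree.Node 4 [:: F q.1; F q.2]) \o
               (fun u => (vcolors c u, vcolors c (t :|: u)))) (upper_nb E t).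
  apply/eq_in_map => u; rewrite mem_filter !mem_simplices => /andP [/and4P [_ _ simtu _] simu].
  by rewrite /= !IHk.
by rewrite map_comp; apply/perm_msort/perm_map/perm_upper_profile.
Qed.

Lemma edge_inj : injective (fun v => [set v; s v]).
Proof.
move=> v w /= vw; have /set2P [// | vsw] : v \in [set w; s w] by rewrite -vw !inE eqxx.
have /set2P [svw | /(can_inj sK) //] : s v \in [set w; s w] by rewrite -vw !inE eqxx orbT.
by move: (s2_nofix w); rewrite -vsw svw eqxx.
Qed.

Lemma perm_simplices : perm_eq (simplices E)
  ([seq [set v] | v <- enum V] ++ [seq [set v; s v] | v <- enum V]).
Proof.
apply: uniq_perm; first exact: enum_uniq.
  rewrite cat_uniq (map_inj_uniq set1_inj) (map_inj_uniq edge_inj) enum_uniq /= andbT.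
  apply/hasPn => _ /mapP [v _ ->]; apply/mapP => -[w _ vw].
  by move: (cards2 v (s v)); rewrite vw cards1 neq_s.
move=> t; rewrite mem_simplices mem_cat; apply/idP/orP.
  by case/simplexP => [] [v ->]; [left | right]; apply: map_f; rewrite mem_enum.
by case=> /mapP [v _ ->]; rewrite ?simplex_set1 ?simplex_edge.
Qed.

Lemma perm_swl_hist k : perm_eq (swl_hist E c k)
  (map (profile_color nextc prevc k)
       ([seq [:: c v] | v <- enum V] ++ [seq sort leq [:: c v; nextc (c v)] | v <- enum V])).
Proof.
have -> : swl_hist E c k = map (profile_color nextc prevc k \o vcolors c) (simplices E).
  by apply/eq_in_map => t; rewrite mem_simplices => /swl_color_profile.
rewrite map_comp; apply/perm_map/(perm_trans (perm_map _ perm_simplices)).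
rewrite map_cat -!map_comp; apply: perm_cat.
  by rewrite (eq_map (vcolors_set1 c)).
rewrite (eq_map (fun v => vcolors_pair c (neq_s v))).
by under eq_map => v do rewrite c_next.
Qed.

End CycleCover.

Lemma addrr_F2 (x : 'F_2) : (x + x = 0)%R.
Proof. exact: addrr_pchar2 (pchar_Fp (isT : prime 2)) x. Qed.

Lemma addmx_F2 m n (A : 'M['F_2]_(m, n)) : (A + A = 0)%R.
Proof. by apply/matrixP => i j; rewrite !mxE addrr_F2. Qed.

Section Homology0.
Variable V : finType.
Local Open Scope ring_scope.
Local Notation N := #|{: {set V}}|.

Definition vchain (v : V) : 'rV['F_2]_N := 'e_(enum_rank [set v]).

Definition subset_cochain (L : {set V}) : 'cV['F_2]_N := \col_j (sofi j \subset L)%:R.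

Lemma sofi_rank (A : {set V}) : sofi (enum_rank A) = A.
Proof. exact: enum_rankK. Qed.

Lemma eq_rank_sofi (j : 'I_N) (A : {set V}) : (j == enum_rank A) = (sofi j == A).
Proof. by apply/eqP/eqP => [-> | <-]; [exact: sofi_rank | rewrite /sofi enum_valK]. Qed.

Lemma vchain_mul_subset_cochain v L : (vchain v *m subset_cochain L) 0 0 = (v \in L)%:R.
Proof. by rewrite -rowE !mxE sofi_rank sub1set. Qed.

Lemma row_bnd_set1 v : row (enum_rank [set v]) (bnd V) = 0.
Proof.
apply/rowP => j; rewrite !mxE sofi_rank cards1 eqSS cards_eq0.
by case: (sofi j == set0); rewrite ?andbF.
Qed.

Lemma row_bnd_pair a b : a != b -> row (enum_rank [set a; b]) (bnd V) = vchain a + vchain b.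
Proof.
move=> ab; apply/rowP => j; rewrite !mxE sofi_rank cards2 ab eqSS !eq_rank_sofi.
have -> : (#|sofi j| == 1)%N && (sofi j != set0) = (#|sofi j| == 1)%N.
  by rewrite -card_gt0; case: #|_| => [|[]].
rewrite subset_pair_card1; have [-> | _] := eqVneq (sofi j) [set a]; last by rewrite add0r.
by rewrite set1_eq (negbTE ab) addr0.
Qed.

Lemma chains_idem (P : pred {set V}) k : chains P k *m chains P k = chains P k.
Proof.
rewrite mulmx_diag; congr diag_mx; apply/rowP => i; rewrite !mxE.
by case: (_ && _); rewrite /= ?mulr1 ?mulr0.
Qed.

Lemma chains0_pair_support (P : pred {set V}) a b x : a != b ->
    (forall T, P T && (#|T| == 1)%N = (T == [set a]) || (T == [set b])) ->
    (x <= chains P 0)%MS ->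
  x = x 0 (enum_rank [set a]) *: vchain a + x 0 (enum_rank [set b]) *: vchain b.
Proof.
move=> ab Psupp /submxP [z defx].
have xK : x *m chains P 0 = x by rewrite defx -mulmxA chains_idem.
apply/rowP => j; rewrite -{1}xK mul_mx_diag !mxE Psupp !eq_rank_sofi.
have [ja | nja] := eqVneq (sofi j) [set a].
  have -> : (sofi j == [set b]) = false by rewrite ja set1_eq (negbTE ab).
  by rewrite -ja /sofi enum_valK /= mulr0 addr0.
have [jb | njb] := eqVneq (sofi j) [set b]; last by rewrite /= !mulr0 addr0.
by rewrite -jb /sofi enum_valK /= mulr0 add0r.
Qed.

Lemma vchain_sub_cycles (P : pred {set V}) v : P [set v] -> (vchain v <= cycles P 0)%MS.
Proof.
move=> Pv; rewrite sub_capmx sub_kermx /vchain -rowE row_bnd_set1 eqxx andbT.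
suff <- : row (enum_rank [set v]) (chains P 0) = 'e_(enum_rank [set v]) by apply: row_sub.
by rewrite row_diag_mx mxE sofi_rank Pv cards1 scale1r.
Qed.

Section Filtration.
Variables (c : V -> nat) (f : nat -> nat).

Lemma cycles0_filt_eq (e e' : rel V) o :
  cycles (filt e c f o) 0 = cycles (filt e' c f o) 0.
Proof.
rewrite /cycles /chains; congr (diag_mx _ :&: _)%MS; apply/rowP => i; rewrite !mxE.
case/boolP: (#|sofi i| == 1)%N => [/cards1P [v ->] | _]; last by rewrite !andbF.
by rewrite /filt /= !simplex_set1.
Qed.

Lemma row_bounds_pair (e : rel V) a b : a != b -> simplex e [set a; b] ->
  row (enum_rank [set a; b]) (bounds (filt e c f None) 0) = vchain a + vchain b.
Proof.
move=> ab simab; rewrite /bounds row_mul row_diag_mx mxE sofi_rank /filt /= simab cards2 ab.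
by rewrite scale1r -rowE row_bnd_pair.
Qed.

Lemma walk_bounds (e : rel V) (u : nat -> V) n : simple_graph e ->
    (forall k, (k < n)%N -> e (u k) (u k.+1)) ->
  ((vchain (u 0%N) + vchain (u n))%R <= bounds (filt e c f None) 0)%MS.
Proof.
case=> sym_e irr_e; elim: n => [|n IHn] walk; first by rewrite addmx_F2 sub0mx.
have -> : vchain (u 0%N) + vchain (u n.+1) =
          vchain (u 0%N) + vchain (u n) + (vchain (u n) + vchain (u n.+1)).
  by rewrite addrA -[vchain (u 0%N) + _ + _]addrA addmx_F2 addr0.
have e_n : e (u n) (u n.+1) by apply: walk.
have neq_n : u n != u n.+1 by apply: contraTneq e_n => ->; rewrite irr_e.
rewrite addmx_sub //; first by apply: IHn => k /ltnW; apply: walk.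
by rewrite -(@row_bounds_pair e _ _ neq_n) ?row_sub // simplex_pair.
Qed.

(* The indicator of an edge-closed vertex set vanishes on the boundary [a] + [b]
   of every edge, hence on all 0-boundaries. *)
Lemma sub_bounds_mul_subset_cochain (e : rel V) o (L : {set V}) m (x : 'M_(m, N)) :
    (forall y z, e y z -> (y \in L) = (z \in L)) ->
    (x <= bounds (filt e c f o) 0)%MS ->
  x *m subset_cochain L = 0.
Proof.
move=> closedL /submxP [y ->]; rewrite /bounds -!mulmxA.
suff -> : chains (filt e c f o) 1 *m (bnd V *m subset_cochain L) = 0 by rewrite mulmx0.
apply/row_matrixP => i; rewrite row_mul row_diag_mx -scalemxAl -rowE row_mul row0 mxE.
case/boolP: (filt e c f o (sofi i) && (#|sofi i| == 2)%N); last by rewrite scale0r.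
case/andP => /andP [simi _] /cards2P [a [b [ab defi]]].
have e_ab : e a b by apply: simplex_rel simi _ _ ab; rewrite defi !inE eqxx ?orbT.
rewrite -[i]enum_valK -/(sofi i) defi row_bnd_pair // mulmxDl scale1r.
apply/rowP => k; rewrite [k]ord1 [LHS]mxE !vchain_mul_subset_cochain (closedL a b) //.
by rewrite addrr_F2 mxE.
Qed.

End Filtration.

End Homology0.

Definition ord8 (F : nat -> nat) (x : 'I_8) : 'I_8 := inord (F x).

Definition col8 (x : 'I_8) : nat := x %% 4.
Definition next4 r := r.+1 %% 4.
Definition prev4 r := (r + 3) %% 4.

Lemma all_iota8 (Q : pred nat) : all Q (iota 0 8) -> forall x : 'I_8, Q x.
Proof. by move/allP => allQ x; apply: allQ; rewrite mem_iota ltn_ord. Qed.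

(* Facts about the two concrete complexes are stated on [nat] so that these
   hypotheses can be decided by evaluation over 0..7. *)
Section Ord8CycleCover.
Variables S P : nat -> nat.
Hypothesis S_P_lt8 : all (fun n => (S n < 8) && (P n < 8))%N (iota 0 8).
Hypothesis S_P_cover :
  all (fun n => [&& P (S n) == n, S (P n) == n, S n != n & S (S n) != n]) (iota 0 8).
Hypothesis S_triangle_free : all (fun a => all (fun b => all (fun d =>
    ~~ [&& cycle_rel S a b, cycle_rel S b d & cycle_rel S a d])
  (iota 0 8)) (iota 0 8)) (iota 0 8).
Hypothesis S_P_col :
  all (fun n => (S n %% 4 == next4 (n %% 4)) && (P n %% 4 == prev4 (n %% 4))) (iota 0 8).

Lemma val_ord8S x : ord8 S x = S x :> nat.
Proof. by rewrite inordK //; case/andP: (all_iota8 S_P_lt8 x). Qed.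

Lemma val_ord8P x : ord8 P x = P x :> nat.
Proof. by rewrite inordK //; case/andP: (all_iota8 S_P_lt8 x). Qed.

Lemma cycle_rel_ord8 x y : cycle_rel (ord8 S) x y = cycle_rel S x y.
Proof. by rewrite /cycle_rel -!val_eqE /= !val_ord8S. Qed.

Lemma ord8S_nofix x : ord8 S x != x.
Proof. by rewrite -val_eqE /= val_ord8S; case/and4P: (all_iota8 S_P_cover x). Qed.

Lemma simple_cycle_rel_ord8 : simple_graph (cycle_rel (ord8 S)).
Proof.
split; first exact: cycle_rel_sym.
by move=> x; rewrite /cycle_rel orbb eq_sym (negbTE (ord8S_nofix x)).
Qed.

Lemma perm_swl_hist_ord8 k : perm_eq (swl_hist (cycle_rel (ord8 S)) col8 k)
  (map (profile_color next4 prev4 k)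
       ([seq [:: col8 v] | v <- enum 'I_8] ++
        [seq sort leq [:: col8 v; next4 (col8 v)] | v <- enum 'I_8])).
Proof.
apply: (@perm_swl_hist _ _ (ord8 P)) => [x|x|x|x|x y z|x|x].
- apply: val_inj; rewrite /= val_ord8P val_ord8S.
  by case/and4P: (all_iota8 S_P_cover x) => /eqP.
- apply: val_inj; rewrite /= val_ord8S val_ord8P.
  by case/and4P: (all_iota8 S_P_cover x) => _ /eqP.
- exact: ord8S_nofix.
- by rewrite -val_eqE /= !val_ord8S; case/and4P: (all_iota8 S_P_cover x).
- rewrite !cycle_rel_ord8 => xy yz xz.
  by have := all_iota8 (all_iota8 (all_iota8 S_triangle_free x) y) z; rewrite xy yz xz.
- by rewrite /col8 val_ord8S; case/andP: (all_iota8 S_P_col x) => /eqP.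
- by rewrite /col8 val_ord8P; case/andP: (all_iota8 S_P_col x) => _ /eqP.
Qed.

End Ord8CycleCover.

Definition succ8 n := n.+1 %% 8.
Definition pred8 n := (n + 7) %% 8.
Definition succ44 n := n %/ 4 * 4 + n.+1 %% 4.
Definition pred44 n := n %/ 4 * 4 + (n + 3) %% 4.

Definition cycle8 : rel 'I_8 := cycle_rel (ord8 succ8).
Definition two_cycles4 : rel 'I_8 := cycle_rel (ord8 succ44).

Lemma simple_cycle8 : simple_graph cycle8.
Proof. exact: (@simple_cycle_rel_ord8 _ pred8). Qed.

Lemma simple_two_cycles4 : simple_graph two_cycles4.
Proof. exact: (@simple_cycle_rel_ord8 _ pred44). Qed.

Lemma swl_indistinguishable_cycles : swl_indistinguishable cycle8 col8 two_cycles4 col8.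
Proof.
move=> k; apply: perm_trans (@perm_swl_hist_ord8 succ8 pred8 isT isT isT isT k) _.
by rewrite perm_sym; apply: (@perm_swl_hist_ord8 succ44 pred44).
Qed.

Lemma cycle8_succ n : n < 7 -> cycle8 (inord n) (inord n.+1).
Proof.
move=> n_lt7; rewrite /cycle8 (@cycle_rel_ord8 _ pred8) // /cycle_rel.
by rewrite !inordK ?(leq_trans n_lt7) // /succ8 modn_small ?eqxx // ltnS ltnW.
Qed.

Lemma two_cycles4_block x y : two_cycles4 x y -> x %/ 4 = y %/ 4.
Proof.
rewrite /two_cycles4 (@cycle_rel_ord8 _ pred44) // => xy; apply/eqP.
have blocks : all (fun a => all (fun b =>
  cycle_rel succ44 a b ==> (a %/ 4 == b %/ 4)) (iota 0 8)) (iota 0 8) by [].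
by have := all_iota8 (all_iota8 blocks x) y; rewrite xy.
Qed.

Lemma simplex_preserving_rel (V V' : finType) (e : rel V) (e' : rel V') (phi : V -> V') :
    simple_graph e -> symmetric e' -> injective phi ->
    (forall t, simplex e t = simplex e' (phi @: t)) ->
  forall x y, e x y -> e' (phi x) (phi y).
Proof.
move=> [sym_e irr_e] sym_e' inj_phi simplex_phi x y exy.
have xy : x != y by apply: contraTneq exy => ->; rewrite irr_e.
rewrite -simplex_pair ?(inj_eq inj_phi) // -(imset_set1 phi y) -imsetU1 -simplex_phi.
by rewrite simplex_pair.
Qed.

Lemma not_colored_iso_cycles : ~ colored_iso cycle8 col8 two_cycles4 col8.
Proof.
case=> phi [bij_phi simplex_phi _].
have e_phi :=
  simplex_preserving_rel simple_cycle8 (cycle_rel_sym _) (bij_inj bij_phi) simplex_phi.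
have block n : n < 8 -> phi (inord n) %/ 4 = phi (inord 0) %/ 4.
  elim: n => // n IHn n_lt8; rewrite -IHn ?(ltnW n_lt8) //.
  exact/esym/two_cycles4_block/e_phi/cycle8_succ.
case: bij_phi => psi _ psiK.
have := block _ (ltn_ord (psi (inord 4))).
rewrite -(block _ (ltn_ord (psi (inord 0)))) !inord_val !psiK.
by rewrite !inordK.
Qed.

Section PersistenceDim0.
Local Open Scope ring_scope.
Local Notation v0 := (inord 0%N : 'I_8).
Local Notation v4 := (inord 4%N : 'I_8).
Local Notation Z0 := (cycles (filt cycle8 col8 id (Some 0%N)) 0).

Lemma K0_vertices (e : rel 'I_8) T :
  filt e col8 id (Some 0%N) T && (#|T| == 1)%N = (T == [set v0]) || (T == [set v4]).
Proof.
have [/cards1P [v ->] | T1] := boolP (#|T| == 1)%N.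
  rewrite /filt /= simplex_set1 /fval big_set1 !set1_eq -!val_eqE /= !inordK // andbT.
  have col0 : all (fun n => (n %% 4 <= 0)%N == (n == 0%N) || (n == 4%N)) (iota 0 8) by [].
  exact: eqP (all_iota8 col0 v).
by rewrite andbF; apply/esym/norP; split; apply: contraNneq T1 => ->; rewrite cards1.
Qed.

Lemma v0_neq_v4 : v0 != v4.
Proof. by rewrite -val_eqE /= !inordK. Qed.

Lemma vchain_v0_v4_sub_cycles : ((vchain v0 + vchain v4)%R <= Z0)%MS.
Proof.
have K0v (v : 'I_8) : [set v] \in [set [set v0]; [set v4]] ->
    filt cycle8 col8 id (Some 0%N) [set v].
  by rewrite !inE -(K0_vertices cycle8) cards1 andbT.
by rewrite addmx_sub // vchain_sub_cycles // K0v // !inE eqxx ?orbT.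
Qed.

Lemma rank_cap_bounds_cycle8 : (0 < \rank (Z0 :&: bounds (filt cycle8 col8 id None) 0))%N.
Proof.
have walk : ((vchain v0 + vchain v4)%R <= bounds (filt cycle8 col8 id None) 0)%MS.
  apply: (@walk_bounds _ _ _ _ (fun n => inord n) 4 simple_cycle8) => k k_lt4.
  exact: cycle8_succ (leq_trans k_lt4 _).
have /mxrankS : ((vchain v0 + vchain v4)%R <= Z0 :&: bounds (filt cycle8 col8 id None) 0)%MS.
  by rewrite sub_capmx vchain_v0_v4_sub_cycles.
apply: leq_trans; rewrite rank_rV lt0b; apply/eqP => /rowP /(_ (enum_rank [set v0])).
rewrite !mxE !eq_rank_sofi !sofi_rank !eqxx set1_eq (negbTE v0_neq_v4) addr0.
by move/eqP; rewrite oner_eq0.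
Qed.

Lemma rank_cap_bounds_two_cycles4 :
  \rank (Z0 :&: bounds (filt two_cycles4 col8 id None) 0)%MS = 0%N.
Proof.
apply/eqP; rewrite mxrank_eq0 -submx0; apply/row_subP => i; rewrite submx0; apply/eqP.
set x := row i _.
have xZ : (x <= Z0)%MS by apply: submx_trans (row_sub _ _) (capmxSl _ _).
have xB : (x <= bounds (filt two_cycles4 col8 id None) 0)%MS.
  by apply: submx_trans (row_sub _ _) (capmxSr _ _).
have := chains0_pair_support v0_neq_v4 (K0_vertices cycle8) (submx_trans xZ (capmxSl _ _)).
set a := x 0 _; set b := x 0 _ => defx.
have block_coeff (k : nat) : a * (v0 %/ 4 == k)%N%:R + b * (v4 %/ 4 == k)%N%:R = 0.
  have closed y z : two_cycles4 y z ->
      (y \in [set v : 'I_8 | v %/ 4 == k]%N) = (z \in [set v : 'I_8 | v %/ 4 == k]%N).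
    by move/two_cycles4_block => yz; rewrite !inE yz.
  move/matrixP: (sub_bounds_mul_subset_cochain closed xB) => /(_ 0 0).
  rewrite defx mulmxDl -!scalemxAl [LHS]mxE 2![(_ *: _ : 'M_1) 0 0]mxE.
  by rewrite !vchain_mul_subset_cochain mxE !inE.
have := block_coeff 0%N; have := block_coeff 1%N; rewrite !inordK //= !mulr1 !mulr0.
by rewrite add0r addr0 defx => -> ->; rewrite !scale0r addr0.
Qed.

End PersistenceDim0.

Theorem proposition1 :
  exists (V V' : finType) (e : rel V) (e' : rel V') (c : V -> nat) (c' : V' -> nat),
    [/\ simple_graph e, simple_graph e',
        ~ colored_iso e c e' c',
        swl_indistinguishable e c e' c'
      & exists f : nat -> nat, pd_differ e c e' c' f].
Proof.
exists 'I_8, 'I_8, cycle8, two_cycles4, col8, col8; split.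
- exact: simple_cycle8.
- exact: simple_two_cycles4.
- exact: not_colored_iso_cycles.
- exact: swl_indistinguishable_cycles.
exists id, 0, 0, None.
rewrite /pdiagram /pbetti_prev /pbetti !subr0 (cycles0_filt_eq _ _ two_cycles4 cycle8).
rewrite rank_cap_bounds_two_cycles4 subn0 eqz_nat neq_ltn ltn_subrL rank_cap_bounds_cycle8.
by rewrite (leq_trans rank_cap_bounds_cycle8) ?mxrankS ?capmxSl.
Qed.
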